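(* Let $D=2$, $K<C$, and let user and creator types be drawn i.i.d. from the uniform distribution on $\{x\in\mathbb R^2_{\ge0}:\|x\|_2=1\}$. Index the creators in increasing order of angle, so that $c_i=(\cos(X_i\pi/2),\sin(X_i\pi/2))$ where $X_1\le\dots\le X_C$ are the order statistics of $C$ i.i.d. $\mathrm{Uniform}[0,1]$ variables. Define $R_1=\left[0,\frac{X_1+X_{K+1}}2\right]$, $R_i=\left(\frac{X_{i-1}+X_{i+K-1}}2,\frac{X_i+X_{i+K}}2\right]$ for $2\le i\le C-K$, and $R_{C-K+1}=\left(\frac{X_{C-K}+X_C}2,1\right]$. Then at $t=0$, the user-centric algorithm assigns a user with type $(\cos(y\pi/2),\sin(y\pi/2))$, $y\in[0,1]$, to creators $\{i,i+1,\dots,i+K-1\}$ if and only if $y\in R_i$.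
   Context: The user-centric algorithm at $t=0$ assigns each user $i$ the set $UC_0(i)\in\arg\max_{S\subseteq\mathcal C_0,|S|\le K}\sum_{j\in S}u_i^Tc_j$, i.e. her $K$ creators of highest engagement $u_i^Tc_j$. *)

From mathcomp Require Import all_boot all_order all_algebra.
From mathcomp Require Import reals trigo.
Set Implicit Arguments. Unset Strict Implicit. Unset Printing Implicit Defensive.
Import Order.TTheory GRing.Theory Num.Theory.
Local Open Scope ring_scope.

Section Defs.
Variable R : realType.

Definition angle_pt (a : R) : R * R := (cos (a * pi / 2), sin (a * pi / 2)).

Definition dot2 (u c : R * R) : R := u.1 * c.1 + u.2 * c.2.

(* creators indexed 0..C-1 (0-based), creator j has type angle_pt (X j) *)
Definition engagement_sum (C : nat) (X : nat -> R) (y : R) (S : {set 'I_C}) : R :=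
  \sum_(j in S) dot2 (angle_pt y) (angle_pt (X j)).

(* S is a valid output UC_0 of the user-centric algorithm for the user of
   type angle_pt y : S is in argmax_{|S| <= K} sum_{j in S} u^T c_j *)
Definition is_UC0 (C K : nat) (X : nat -> R) (y : R) (S : {set 'I_C}) : Prop :=
  (#|S| <= K)%N /\
  forall T : {set 'I_C}, (#|T| <= K)%N ->
    engagement_sum X y T <= engagement_sum X y S.

(* the window of creators {i, ..., i+K-1} (0-based; paper's i+1) *)
Definition window (C K i : nat) : {set 'I_C} :=
  [set j : 'I_C | (i <= j < i + K)%N].

(* the region R_i (0-based; paper's R_{i+1}) *)
Definition region (C K : nat) (X : nat -> R) (i : nat) (y : R) : Prop :=
  (if i == 0%N then 0 <= y else (X i.-1 + X (i + K).-1) / 2 < y) /\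
  (if i == (C - K)%N then y <= 1 else y <= (X i + X (i + K)%N) / 2).

End Defs.

From mathcomp Require Import all_boot all_order all_algebra.
From mathcomp Require Import reals trigo.
From mathcomp Require Import ring lra zify.
Import Order.TTheory GRing.Theory Num.Theory.
Local Open Scope ring_scope.

(* The engagement of the user at angle y with the creator at angle x is
   cos ((y - x) pi / 2), a decreasing function of |y - x| on [0, 1], so UC_0
   consists of K creators nearest to y.  As the X_j increase, the window
   {i, ..., i+K-1} is nearest exactly when y lies right of the midpoint of
   X_(i-1), X_(i+K-1) and left of the midpoint of X_i, X_(i+K) (up to ties at
   these midpoints), i.e. when y is in R_i.  An exchange argument shows that a
   set of at most K weights has maximal sum iff its weights dominate all the
   others; away from the midpoints the domination is strict, which makes the
   window the unique maximiser. *)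

Section TopWeights.
Context {T : finType} {R : realDomainType} (w : T -> R).
Implicit Types S W : {set T}.

Lemma card_setD_le [S W] : (#|S| <= #|W|)%N -> (#|S :\: W| <= #|W :\: S|)%N.
Proof. by move=> SW; have := cardsID W S; have := cardsID S W; rewrite setIC; lia. Qed.

Lemma argmax_top [W a b] :
  (forall S, (#|S| <= #|W|)%N -> \sum_(j in S) w j <= \sum_(j in W) w j) ->
  a \in W -> b \notin W -> w b <= w a.
Proof.
move=> Wmax aW bW; rewrite leNgt; apply/negP => ab.
have bWa : b \notin W :\ a by rewrite !inE negb_and bW orbT.
have := Wmax (b |: (W :\ a)); rewrite cardsU1 bWa (cardsD1 a W) aW.
rewrite big_setU1 //= (big_setD1 a aW) /= => /(_ (leqnn _)).
by rewrite lerD2r leNgt ab.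
Qed.

Hypothesis w_ge0 : forall a, 0 <= w a.

Lemma sum_setD_ge_min [S W a] : (#|S| <= #|W|)%N ->
  (forall a', a' \in W :\: S -> w a <= w a') ->
  w a *+ #|S :\: W| <= \sum_(j in W :\: S) w j.
Proof.
move=> SW amin; apply: (@le_trans _ _ (w a *+ #|W :\: S|)).
  exact/(ler_wpMn2l (w_ge0 a))/card_setD_le.
by rewrite -sumr_const; apply: ler_sum.
Qed.

Lemma sum_le_top [S W] : (#|S| <= #|W|)%N ->
  (forall a b, a \in W -> b \notin W -> w b <= w a) ->
  \sum_(j in S) w j <= \sum_(j in W) w j.
Proof.
move=> SW Wtop; rewrite (big_setID W) [leRHS](big_setID S) /= setIC lerD2l.
have [WS0 | [a0 a0WS]] := set_0Vmem (W :\: S).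
  have := card_setD_le SW; rewrite WS0 cards0 leqn0 cards_eq0 => /eqP->.
  by rewrite !big_set0.
have [a /setDP[aW _] amin] := arg_minP w a0WS.
apply: le_trans (sum_setD_ge_min SW amin).
by rewrite -sumr_const; apply: ler_sum => b /setDP[_]; exact: Wtop.
Qed.

Lemma sum_lt_top [S W] : (#|W| < #|T|)%N -> (#|S| <= #|W|)%N ->
  (forall a b, a \in W -> b \notin W -> w b < w a) -> S != W ->
  \sum_(j in S) w j < \sum_(j in W) w j.
Proof.
move=> W_proper SW Wtop SneW.
(* a weight outside W makes all weights in W positive *)
have /card_gt0P[b0] : (0 < #|~: W|)%N by have := cardsC W; lia.
rewrite inE => b0W.
rewrite (big_setID W) [ltRHS](big_setID S) /= setIC ltrD2l.
have [SW0 | [b bSW]] := set_0Vmem (S :\: W).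
  have [a aWS] : exists a, a \in W :\: S.
    apply/set0Pn; apply: contra SneW => /eqP WS0.
    by rewrite eqEsubset -!setD_eq0 SW0 WS0 eqxx.
  rewrite SW0 big_set0 (big_setD1 a aWS) /=; have [aW _] := setDP aWS.
  by rewrite ltr_wpDr ?sumr_ge0 // (le_lt_trans (w_ge0 b0)) ?Wtop.
have [a0 a0WS] : exists a0, a0 \in W :\: S.
  by apply/card_gt0P; apply: leq_trans (card_setD_le SW); apply/card_gt0P; exists b.
have [a /setDP[aW _] amin] := arg_minP w a0WS.
apply: lt_le_trans (sum_setD_ge_min SW amin).
rewrite -sumr_const; apply: ltr_sum => [|b' /setDP[_]]; last exact: Wtop.
by apply/hasP; exists b; rewrite ?mem_index_enum.
Qed.

End TopWeights.

Section Engagement.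
Variable R : realType.
Implicit Types x y z : R.

Lemma dot2_angle_pt y x :
  dot2 (angle_pt y) (angle_pt x) = cos (`|y - x| * (pi / 2)).
Proof.
rewrite /dot2 /angle_pt /= -cosB -[LHS]cos_norm; congr cos.
rewrite -!mulrA -mulrBl normrM [`|pi / 2|]ger0_norm //.
by rewrite divr_ge0 ?pi_ge0.
Qed.

Lemma dist_le1 [x y] : 0 <= x <= 1 -> 0 <= y <= 1 -> `|y - x| <= 1.
Proof. by move=> x01 y01; rewrite ler_norml; lra. Qed.

Lemma dot2_angle_pt_ge0 y x : 0 <= x <= 1 -> 0 <= y <= 1 ->
  0 <= dot2 (angle_pt y) (angle_pt x).
Proof.
move=> x01 y01; rewrite dot2_angle_pt; apply: cos_ge0_pihalf.
have := dist_le1 x01 y01; have := normr_ge0 (y - x); have := pi_gt0 R; nra.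
Qed.

Lemma ltr_dot2_angle_pt y x z : 0 <= x <= 1 -> 0 <= z <= 1 -> 0 <= y <= 1 ->
  (dot2 (angle_pt y) (angle_pt x) < dot2 (angle_pt y) (angle_pt z)) =
  (`|y - z| < `|y - x|).
Proof.
move=> x01 z01 y01; have pi_pos := pi_gt0 R.
have in_0pi (d : R) : 0 <= d <= 1 -> d * (pi / 2) \in `[0, pi].
  by case/andP=> d0 d1; rewrite in_itv /=; apply/andP; split; nra.
rewrite !dot2_angle_pt ltr_cos ?in_0pi ?normr_ge0 ?dist_le1 //.
by rewrite ltr_pM2r // divr_gt0.
Qed.

Lemma ler_dot2_angle_pt y x z : 0 <= x <= 1 -> 0 <= z <= 1 -> 0 <= y <= 1 ->
  (dot2 (angle_pt y) (angle_pt z) <= dot2 (angle_pt y) (angle_pt x)) =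
  (`|y - x| <= `|y - z|).
Proof. by move=> x01 z01 y01; rewrite leNgt ltr_dot2_angle_pt // -leNgt. Qed.

End Engagement.

Section Midpoint.
Variable R : realFieldType.
Implicit Types x y z : R.

Lemma ltr_distl_mid x z y : x < z -> (`|y - x| < `|y - z|) = (y < (x + z) / 2).
Proof.
move=> xz; case: (ger0P (y - x)) => ?; case: (ger0P (y - z)) => ?;
  apply/idP/idP => ?; lra.
Qed.

Lemma ltr_distr_mid x z y : x < z -> (`|y - z| < `|y - x|) = ((x + z) / 2 < y).
Proof.
move=> xz; case: (ger0P (y - x)) => ?; case: (ger0P (y - z)) => ?;
  apply/idP/idP => ?; lra.
Qed.

End Midpoint.

Lemma card_window (C K i : nat) : (i + K <= C)%N -> #|window C K i| = K.
Proof.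
move=> iKC; transitivity (\sum_(i <= j < i + K) 1)%N; last first.
  by rewrite sum_nat_const_nat muln1 addKn.
rewrite (big_nat_widen _ _ _ _ _ iKC) (big_nat_widenl _ _ _ _ _ (leq0n i)).
by rewrite big_mkord -sum1_card; apply: eq_bigl => j; rewrite inE andbC.
Qed.

Section Window.
Variables (R : realType) (C K : nat) (X : nat -> R).
Hypotheses (K_gt0 : (0 < K)%N) (K_lt_C : (K < C)%N).
Hypothesis X01 : forall j, (j < C)%N -> 0 <= X j <= 1.
Hypothesis X_incr : forall j, (j.+1 < C)%N -> X j < X j.+1.

Lemma X_lt j k : (j < k)%N -> (k < C)%N -> X j < X k.
Proof.
move=> jk kC; have jC : (j < C)%N by apply: ltn_trans kC.
apply: (homo_ltn_in (D := [pred n | (n < C)%N]) lt_trans) => //=.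
  by move=> m n _ nC l /andP[_ ln]; apply: ltn_trans ln nC.
by move=> n _; apply: X_incr.
Qed.

Lemma X_le j k : (j <= k)%N -> (k < C)%N -> X j <= X k.
Proof. by rewrite leq_eqVlt => /predU1P[-> // | jk] kC; apply/ltW/X_lt. Qed.

Variables (y : R) (i : nat).
Hypotheses (y01 : 0 <= y <= 1) (i_le : (i <= C - K)%N).

Let mid j := (X j + X (j + K)) / 2.

Fact card_window_K : #|window C K i| = K.
Proof. by apply: card_window; lia. Qed.

Let eng (j : 'I_C) := dot2 (angle_pt y) (angle_pt (X j)).

Fact eng_ge0 j : 0 <= eng j.
Proof. by apply: dot2_angle_pt_ge0; rewrite ?X01. Qed.

Lemma regionP :
  region C K X i y <-> ((0 < i)%N -> mid i.-1 < y) /\ ((i + K < C)%N -> y <= mid i).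
Proof.
have left_eq : (if i == 0%N then 0 <= y else (X i.-1 + X (i + K).-1) / 2 < y)
    <-> ((0 < i)%N -> mid i.-1 < y).
  case: posnP => [-> | i_gt0] /=; first by split=> // _; case/andP: y01.
  by rewrite /mid (_ : (i.-1 + K = (i + K).-1)%N); [split=> [|->] | lia].
have right_eq : (if i == (C - K)%N then y <= 1 else y <= mid i)
    <-> ((i + K < C)%N -> y <= mid i).
  case: eqP => [-> | ne]; last by split=> [|->] //; lia.
  by split=> _; [lia | case/andP: y01].
by split=> -[l r]; split; [apply/left_eq | apply/right_eq | apply/left_eq | apply/right_eq].
Qed.

Lemma region_dist_left a b : region C K X i y -> (b < i)%N -> (i <= a < i + K)%N ->
  `|y - X a| < `|y - X b|.
Proof.
move=> /regionP[left _] bi /andP[ia aiK]; have i_gt0 : (0 < i)%N by lia.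
rewrite ltr_distr_mid ?X_lt //; try lia.
have Xb : X b <= X i.-1 by apply: X_le; lia.
have Xa : X a <= X (i.-1 + K) by apply: X_le; lia.
by have := left i_gt0; rewrite /mid; lra.
Qed.

Lemma mid_le_right a b : (i <= a < i + K)%N -> (i + K <= b < C)%N ->
  mid i <= (X a + X b) / 2.
Proof.
move=> /andP[ia aiK] /andP[iKb bC].
have Xa : X i <= X a by apply: X_le; lia.
have Xb : X (i + K) <= X b by apply: X_le; lia.
by rewrite /mid; lra.
Qed.

Lemma region_dist_le a b : region C K X i y -> (i <= a < i + K)%N -> (b < C)%N ->
  ~~ (i <= b < i + K)%N -> `|y - X a| <= `|y - X b|.
Proof.
move=> reg aW bC bW; have [bi | ib] := ltnP b i; first exact/ltW/region_dist_left.
have iKb : (i + K <= b)%N by lia.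
have [_ right] := regionP.1 reg.
rewrite leNgt ltr_distr_mid ?X_lt -?leNgt; try lia.
by apply: le_trans (right _) (mid_le_right a b _ _); lia.
Qed.

Lemma region_dist_lt a b : (forall j, (j + K < C)%N -> y <> mid j) ->
  region C K X i y -> (i <= a < i + K)%N -> (b < C)%N ->
  ~~ (i <= b < i + K)%N -> `|y - X a| < `|y - X b|.
Proof.
move=> generic reg aW bC bW; have [bi | ib] := ltnP b i; first exact: region_dist_left.
have iKb : (i + K <= b)%N by lia.
have [_ right] := regionP.1 reg.
rewrite ltr_distl_mid ?X_lt; try lia.
apply: lt_le_trans (mid_le_right a b _ _); try lia.
have iKC : (i + K < C)%N by lia.
by rewrite lt_neqAle right // andbT; apply/eqP/generic.
Qed.

Lemma window_UC0 : region C K X i y -> is_UC0 K X y (window C K i).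
Proof.
move=> reg; split=> [|T TK]; rewrite ?card_window_K // /engagement_sum.
apply: (@sum_le_top _ _ eng eng_ge0); first by rewrite card_window_K.
move=> a b; rewrite !inE => aW bW; rewrite ler_dot2_angle_pt ?X01 //.
exact: region_dist_le.
Qed.

Lemma window_UC0_unique T : (forall j, (j + K < C)%N -> y <> mid j) ->
  region C K X i y -> is_UC0 K X y T -> T = window C K i.
Proof.
move=> generic reg [TK Tmax]; apply/eqP/contraT => TW.
have := Tmax _ (eq_leq card_window_K); rewrite leNgt (@sum_lt_top _ _ eng eng_ge0) //.
- by rewrite card_window_K card_ord.
- by rewrite card_window_K.
move=> a b; rewrite !inE => aW bW; rewrite ltr_dot2_angle_pt ?X01 //.
exact: region_dist_lt.
Qed.

Lemma UC0_window_region : (forall j, (j + K < C)%N -> y <> mid j) ->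
  is_UC0 K X y (window C K i) -> region C K X i y.
Proof.
move=> generic [_ Wmax].
have near a b : (a < C)%N -> (b < C)%N -> (i <= a < i + K)%N ->
    ~~ (i <= b < i + K)%N -> `|y - X a| <= `|y - X b|.
  move=> aC bC aW bW; rewrite -ler_dot2_angle_pt ?X01 //.
  apply: (argmax_top eng (W := window C K i) (a := Ordinal aC) (b := Ordinal bC));
    by rewrite ?inE ?card_window_K.
apply/regionP; split=> [i_gt0 | iKC].
  have mid_le : mid i.-1 <= y.
    by rewrite leNgt -ltr_distl_mid ?X_lt -?leNgt; try lia; apply: near; lia.
  by rewrite lt_neqAle mid_le eq_sym andbT; apply/eqP/generic; lia.
by rewrite leNgt -ltr_distr_mid ?X_lt -?leNgt; try lia; apply: near; lia.
Qed.

End Window.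

Theorem lemma11 (R : realType) (C K : nat) (X : nat -> R)
  (hK : (0 < K)%N) (hKC : (K < C)%N)
  (hX01 : forall j, (j < C)%N -> 0 <= X j <= 1)
  (hXinc : forall j, (j.+1 < C)%N -> X j < X j.+1)
  (y : R) (hy : 0 <= y <= 1) (i : nat) (hi : (i <= C - K)%N) :
  (region C K X i y -> is_UC0 K X y (window C K i)) /\
  ((forall j, (j + K < C)%N -> y <> (X j + X (j + K)%N) / 2) ->
     ((forall T : {set 'I_C}, is_UC0 K X y T <-> T = window C K i)
      <-> region C K X i y)).
Proof.
split=> [|generic]; first exact: window_UC0.
split=> [W_unique | reg].
  by apply: UC0_window_region => //; apply/W_unique.
by move=> T; split=> [|->]; [exact: window_UC0_unique | exact: window_UC0].
Qed.
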